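(* Let $K$ be either of the (two non-isomorphic) $2$-uniform tilings of the plane whose vertex types are $[3^3,4^2]$ and $[4^4]$. If $X$ is a map on the torus that is a quotient $X=K/\Gamma$ of $K$, then the vertices of $X$ form exactly $2$ orbits under ${\rm Aut}(X)$.
   Context: A map is a polyhedral map: a cellular embedding of a connected graph in a closed surface such that the intersection of any two distinct faces is empty, a single vertex, or a single edge. For a vertex $u$, the faces containing $u$ form a cyclic sequence (the face-cycle at $u$); if this cyclic sequence consists of consecutive blocks of $n_1$ $p_1$-gons, then $n_2$ $p_2$-gons, ..., then $n_k$ $p_k$-gons, with cyclically consecutive $p_i$ distinct, then $u$ is said to have type $[p_1^{n_1},\dots,p_k^{n_k}]$ (defined up to cyclic shift and reversal). A $2$-uniform tiling is an edge-to-edge tiling of the Euclidean plane $\mathbb{R}^2$ by regular polygons whose symmetry group has exactly two orbits on the set of vertices; viewed as a map on the plane, its vertices have (at most) two types, listed as $[W;Z]$. (Up to isomorphism there are exactly $20$ such tilings.) For a map $K$ on the plane, a quotient of $K$ on the torus is a map $X$ on the torus together with a polyhedral covering map $\eta:K\to X$ with $X=K/\Gamma$, where $\Gamma\le {\rm Aut}(K)$ is a subgroup acting without fixed vertices, edges or faces and $K/\Gamma$ is homeomorphic to the torus. ${\rm Aut}(X)$ denotes the automorphism group of the map $X$, acting on its vertex set $V(X)$. *)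

From Stdlib Require Import ZArith List.
Import ListNotations.
Open Scope Z_scope.

(* Vertices: (i, j) = i-th vertex on the j-th horizontal line. *)
Definition V := (Z * Z)%type.

(* Faces, listed counter-clockwise.  Row j (between lines j and j+1) is a
   strip of triangles if j mod p = 0, and a strip of squares otherwise.
   Geometrically vertex (i,j) sits at x = i + (#triangle rows below j)/2,
   y = j * height; so in a triangle row the upper line is shifted by 1/2. *)
Definition sq (i j : Z) : list V := [(i, j); (i + 1, j); (i + 1, j + 1); (i, j + 1)].
Definition up (i j : Z) : list V := [(i, j); (i + 1, j); (i, j + 1)].
Definition dn (i j : Z) : list V := [(i + 1, j); (i + 1, j + 1); (i, j + 1)].

Definition faceK (p : Z) (f : list V) : Prop :=
  exists i j : Z,
    (j mod p = 0 /\ (f = up i j \/ f = dn i j)) \/ (j mod p <> 0 /\ f = sq i j).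

Definition rotl {A : Type} (k : nat) (l : list A) : list A :=
  skipn k l ++ firstn k l.

Definition adj_in (l : list V) (u v : V) : Prop :=
  exists (k : nat) (rest : list V), rotl k l = u :: v :: rest \/ rotl k l = v :: u :: rest.

Definition edgeK (p : Z) (u v : V) : Prop := exists f, faceK p f /\ adj_in f u v.

Definition set_image (s : V -> V) (f g : list V) : Prop :=
  forall z, In z g <-> exists x, In x f /\ s x = z.

Definition isAutK (p : Z) (s : V -> V) : Prop :=
  (exists t : V -> V, forall x, t (s x) = x /\ s (t x) = x) /\
  (forall u v, edgeK p u v <-> edgeK p (s u) (s v)) /\
  (forall f, faceK p f -> exists g, faceK p g /\ set_image s f g) /\
  (forall g, faceK p g -> exists f, faceK p f /\ set_image s f g).

Definition orient_pres (p : Z) (s : V -> V) : Prop :=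
  forall f, faceK p f -> exists g k, faceK p g /\ map s f = rotl k g.

Definition is_group (G : (V -> V) -> Prop) : Prop :=
  G (fun x => x) /\
  (forall g h, G g -> G h -> G (fun x => g (h x))) /\
  (forall g, G g -> exists h, G h /\ forall x, h (g x) = x /\ g (h x) = x).

Definition sameorb (G : (V -> V) -> Prop) (u v : V) : Prop :=
  exists g, G g /\ g u = v.

Definition free_action (p : Z) (G : (V -> V) -> Prop) : Prop :=
  forall g, G g ->
    ((exists v, g v = v) \/
     (exists u v, edgeK p u v /\ ((g u = u /\ g v = v) \/ (g u = v /\ g v = u))) \/
     (exists f, faceK p f /\ set_image g f f)) ->
    forall x, g x = x.

(* K/G is homeomorphic to the torus (combinatorial rendering):
   G <= Aut(K) a subgroup acting freely, orientation preservingly,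
   with compact (finite) quotient. *)
Definition torus_quotient (p : Z) (G : (V -> V) -> Prop) : Prop :=
  is_group G /\
  (forall g, G g -> isAutK p g) /\
  free_action p G /\
  (forall g, G g -> orient_pres p g) /\
  (exists L : list V, forall v, exists u, In u L /\ sameorb G u v).

(* X = K/G is a polyhedral map and eta : K -> X is a polyhedral covering. *)
Definition polyhedral_quotient (p : Z) (G : (V -> V) -> Prop) : Prop :=
  (* eta is injective on each face *)
  (forall f, faceK p f -> forall x y, In x f -> In y f -> sameorb G x y -> x = y) /\
  (* two distinct faces of X meet in nothing, a vertex, or an edge of both *)
  (forall f g, faceK p f -> faceK p g ->
     ~ (exists h, G h /\ set_image h f g) ->
     (forall x y x' y', In x f -> In y f -> In x' g -> In y' g ->
        sameorb G x x' -> sameorb G y y' -> x <> y ->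
        adj_in f x y /\ adj_in g x' y') /\
     ~ (exists x y z x' y' z', In x f /\ In y f /\ In z f /\
          x <> y /\ y <> z /\ x <> z /\ In x' g /\ In y' g /\ In z' g /\
          sameorb G x x' /\ sameorb G y y' /\ sameorb G z z')) /\
  (* no multiple edges in X *)
  (forall u v u' v', edgeK p u v -> edgeK p u' v' ->
     sameorb G u u' -> sameorb G v v' ->
     exists h, G h /\ h u = u' /\ h v = v').

(* automorphisms of X = K/G, acting on vertices of X = G-orbits, given by
   representative maps t : V -> V *)
Definition isAutX (p : Z) (G : (V -> V) -> Prop) (t : V -> V) : Prop :=
  (forall u v, sameorb G u v -> sameorb G (t u) (t v)) /\
  (forall u v, sameorb G (t u) (t v) -> sameorb G u v) /\
  (forall w, exists u, sameorb G (t u) w) /\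
  (forall u v, edgeK p u v ->
     exists u' v', edgeK p u' v' /\ sameorb G (t u) u' /\ sameorb G (t v) v') /\
  (forall u' v', edgeK p u' v' ->
     exists u v, edgeK p u v /\ sameorb G (t u) u' /\ sameorb G (t v) v') /\
  (forall f, faceK p f -> exists g, faceK p g /\
     (forall x, In x f -> exists y, In y g /\ sameorb G (t x) y) /\
     (forall y, In y g -> exists x, In x f /\ sameorb G (t x) y)) /\
  (forall g, faceK p g -> exists f, faceK p f /\
     (forall x, In x f -> exists y, In y g /\ sameorb G (t x) y) /\
     (forall y, In y g -> exists x, In x f /\ sameorb G (t x) y)).

Definition autX_orb (p : Z) (G : (V -> V) -> Prop) (u v : V) : Prop :=
  exists t, isAutX p G t /\ sameorb G (t u) v.

(* An orientation-preserving automorphism of K maps triangles to triangles and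
   squares to squares, and a square meets a triangle only along a horizontal
   edge; propagating this from face to face shows that it is a lattice map
   (i,j) |-> (x0,y0) + d (i,j) with d = 1 or -1.  A half-turn fixes a vertex,
   an edge or a square, so a deck group acting freely consists of translations.
   Hence the translations preserving the strips and the half-turns about points
   of a triangle strip descend to X = K/G, and they move
   (0,0) to every vertex of type [3^3,4^2] and (0,2) to every vertex of type
   [4^4].  Conversely, X has no multiple edges, so the five neighbours of (0,0)
   lie in distinct G-orbits while (0,2) has only four neighbours: no
   automorphism of X maps one vertex to the other. *)

From Stdlib Require Import ZArith List Lia.
Import ListNotations.
Open Scope Z_scope.

Ltac mod_facts := repeat match goal with
 | |- context [?x mod ?c] =>
   lazymatch goal with H : x = c * (x / c) + x mod c |- _ => fail | _ =>
   pose proof (Z.div_mod x c ltac:(lia)); pose proof (Z.mod_pos_bound x c ltac:(lia)) end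
 | H: context [?x mod ?c] |- _ =>
   lazymatch goal with H : x = c * (x / c) + x mod c |- _ => fail | _ =>
   pose proof (Z.div_mod x c ltac:(lia)); pose proof (Z.mod_pos_bound x c ltac:(lia)) end
 end.

Ltac mod_lia := mod_facts; lia.

Ltac split_hyps := repeat match goal with
 | H : _ \/ _ |- _ => destruct H
 | H : _ /\ _ |- _ => destruct H
 end.

Lemma Z_bi_ind (P : Z -> Prop) :
  P 0 -> (forall i, P i -> P (i + 1)) -> (forall i, P (i + 1) -> P i) -> forall i, P i.
Proof.
  intros H0 HS HP i. induction i using Z.peano_ind; auto.
  - rewrite <- Z.add_1_r; auto.
  - apply HP. replace (Z.pred i + 1) with i by lia. auto.
Qed.

Lemma rel_pigeonhole {A B : Type} (eqB : forall x y : B, {x = y} + {x <> y})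
    (R : A -> B -> Prop) (la : list A) (lb : list B) :
  NoDup la ->
  (forall a, In a la -> exists b, In b lb /\ R a b) ->
  (forall a a' b, In a la -> In a' la -> R a b -> R a' b -> a = a') ->
  (length la <= length lb)%nat.
Proof.
  revert lb; induction la as [|a la IH]; intros lb Hnd Htot Hinj; simpl; [lia|].
  inversion Hnd as [|? ? Hnot Hnd']; subst.
  destruct (Htot a (or_introl eq_refl)) as [b [Hb Rab]].
  assert (Hrem : (length la <= length (remove eqB b lb))%nat).
  { apply IH; auto.
    - intros a' Ha'. destruct (Htot a' (or_intror Ha')) as [b' [Hb' Rb']].
      exists b'; split; auto. apply in_in_remove; auto. intros ->.
      apply Hnot. rewrite (Hinj a a' b); simpl; auto.
    - intros a1 a2 b' H1 H2. apply Hinj; simpl; auto. }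
  pose proof (remove_length_lt eqB lb b Hb). lia.
Qed.

Definition fwd_edge (p : Z) (u v : V) : Prop :=
  match u, v with (i, j), (k, l) =>
    (k = i + 1 /\ l = j) \/ (k = i /\ l = j + 1) \/ (j mod p = 0 /\ k = i - 1 /\ l = j + 1)
  end.

Lemma edgeK_sym p u v : edgeK p u v -> edgeK p v u.
Proof. intros [f [Hf [k [r [H|H]]]]]; exists f; split; auto; exists k, r; auto. Qed.

Lemma edgeK_fwd p u v : edgeK p u v -> fwd_edge p u v \/ fwd_edge p v u.
Proof.
  intros [f [[i [j [[Hj [->| ->]] | [Hj ->]]]] [k [rest [Hr|Hr]]]]];
  unfold up, dn, sq, rotl in Hr;
  destruct k as [|[|[|[|[|k]]]]]; simpl in Hr; try discriminate;
  injection Hr; intros; subst; simpl; lia.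
Qed.

Lemma fwd_edgeK p u v : fwd_edge p u v -> edgeK p u v.
Proof.
  destruct u as [i j], v as [k l]; simpl.
  intros [[-> ->]|[[-> ->]|[Hj [-> ->]]]].
  - destruct (Z.eq_dec (j mod p) 0) as [Hj|Hj].
    + exists (up i j); split. exists i, j; left; auto. exists 0%nat, [(i,j+1)]; left; reflexivity.
    + exists (sq i j); split. exists i, j; right; auto. exists 0%nat, [(i+1,j+1);(i,j+1)]; left; reflexivity.
  - destruct (Z.eq_dec (j mod p) 0) as [Hj|Hj].
    + exists (up i j); split. exists i, j; left; auto. exists 2%nat, [(i+1,j)]; right; reflexivity.
    + exists (sq i j); split. exists i, j; right; auto. exists 3%nat, [(i+1,j);(i+1,j+1)]; right; reflexivity.
  - exists (up (i-1) j); split. exists (i-1), j; left; auto. exists 1%nat, [(i-1,j)]; left.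
    unfold up, rotl; simpl. replace (i-1+1) with i by lia. reflexivity.
Qed.

(** * Orientation-preserving automorphisms of K are lattice maps *)

(* The listed points are, in this order, a rotation of the boundary cycle of
   [up a b] or [dn a b] (for [ccw_sq]: of [sq a b]). *)
Definition ccw_tri (x1 y1 x2 y2 x3 y3 a b : Z) : Prop :=
  (x1=a/\y1=b/\x2=a+1/\y2=b/\x3=a/\y3=b+1) \/
  (x1=a+1/\y1=b/\x2=a/\y2=b+1/\x3=a/\y3=b) \/
  (x1=a/\y1=b+1/\x2=a/\y2=b/\x3=a+1/\y3=b) \/
  (x1=a+1/\y1=b/\x2=a+1/\y2=b+1/\x3=a/\y3=b+1) \/
  (x1=a+1/\y1=b+1/\x2=a/\y2=b+1/\x3=a+1/\y3=b) \/
  (x1=a/\y1=b+1/\x2=a+1/\y2=b/\x3=a+1/\y3=b+1).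

Definition ccw_sq (x0 y0 x1 y1 x2 y2 x3 y3 a b : Z) : Prop :=
  (x0=a/\y0=b/\x1=a+1/\y1=b/\x2=a+1/\y2=b+1/\x3=a/\y3=b+1) \/
  (x0=a+1/\y0=b/\x1=a+1/\y1=b+1/\x2=a/\y2=b+1/\x3=a/\y3=b) \/
  (x0=a+1/\y0=b+1/\x1=a/\y1=b+1/\x2=a/\y2=b/\x3=a+1/\y3=b) \/
  (x0=a/\y0=b+1/\x1=a/\y1=b/\x2=a+1/\y2=b/\x3=a+1/\y3=b+1).

Ltac face_image s OP f i j :=
  let g := fresh "g" in let k := fresh "k" in let Hg := fresh in let Hm := fresh in
  destruct (OP f) as [g [k [Hg Hm]]];
  [ exists i, j; first [left; split; [eassumption| auto] | right; split; [eassumption|auto]] | ];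
  simpl in Hm;
  repeat match goal with E : s ?x = _ |- _ => rewrite E in Hm end;
  let a := fresh "a" in let b := fresh "b" in let Hb := fresh "Hb" in
  destruct Hg as [a [b [[Hb [->| ->]] | [Hb ->]]]]; unfold up, dn, sq, rotl in Hm;
  destruct k as [|[|[|[|[|k]]]]]; simpl in Hm; try discriminate;
  injection Hm; intros; subst; exists a, b; split; auto; unfold ccw_tri, ccw_sq; lia.

Section OrientedImages.

Variables (p : Z) (s : V -> V).
Hypothesis s_or : orient_pres p s.

Lemma orient_up_image i j x1 y1 x2 y2 x3 y3 : j mod p = 0 ->
  s (i,j) = (x1,y1) -> s (i+1,j) = (x2,y2) -> s (i,j+1) = (x3,y3) ->
  exists a b, b mod p = 0 /\ ccw_tri x1 y1 x2 y2 x3 y3 a b.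
Proof. intros Hj E1 E2 E3. face_image s s_or (up i j) i j. Qed.

Lemma orient_dn_image i j x1 y1 x2 y2 x3 y3 : j mod p = 0 ->
  s (i+1,j) = (x1,y1) -> s (i+1,j+1) = (x2,y2) -> s (i,j+1) = (x3,y3) ->
  exists a b, b mod p = 0 /\ ccw_tri x1 y1 x2 y2 x3 y3 a b.
Proof. intros Hj E1 E2 E3. face_image s s_or (dn i j) i j. Qed.

Lemma orient_sq_image i j x0 y0 x1 y1 x2 y2 x3 y3 : j mod p <> 0 ->
  s (i,j) = (x0,y0) -> s (i+1,j) = (x1,y1) -> s (i+1,j+1) = (x2,y2) -> s (i,j+1) = (x3,y3) ->
  exists a b, b mod p <> 0 /\ ccw_sq x0 y0 x1 y1 x2 y2 x3 y3 a b.
Proof. intros Hj E0 E1 E2 E3. face_image s s_or (sq i j) i j. Qed.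

End OrientedImages.

Section OrientedAutomorphism.

Variables (p : Z) (s : V -> V).
Hypotheses (Hp : p = 3 \/ p = 4) (s_or : orient_pres p s).

(* The edge (i,j)(i+1,j) also bounds a square, and squares share only their
   horizontal edges with triangles. *)
Lemma up_axes i j x1 y1 x2 y2 x3 y3 : j mod p = 0 ->
  s (i,j) = (x1,y1) -> s (i+1,j) = (x2,y2) -> s (i,j+1) = (x3,y3) ->
  (x2=x1+1/\y2=y1/\x3=x1/\y3=y1+1) \/ (x2=x1-1/\y2=y1/\x3=x1/\y3=y1-1).
Proof.
  intros Hj E1 E2 E3.
  destruct (orient_up_image p s s_or i j x1 y1 x2 y2 x3 y3) as [a [b [Hb T]]]; auto.
  destruct (s (i,j-1)) as [u0 v0] eqn:F0; destruct (s (i+1,j-1)) as [u1 v1] eqn:F1.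
  assert (F2 : s (i+1,j-1+1) = (x2,y2)) by (replace (j-1+1) with j by lia; auto).
  assert (F3 : s (i,j-1+1) = (x1,y1)) by (replace (j-1+1) with j by lia; auto).
  destruct (orient_sq_image p s s_or i (j-1) u0 v0 u1 v1 x2 y2 x1 y1) as [a' [b' [Hb' Q]]]; auto.
  { destruct Hp; subst; mod_lia. }
  clear E1 E2 E3 F0 F1 F2 F3 s_or.
  unfold ccw_tri, ccw_sq in *.
  destruct Hp; subst; clear Hp; mod_facts;
  (destruct T as [T|[T|[T|[T|[T|T]]]]]; [left; lia | | | | right; lia | ];
   exfalso; split_hyps; subst; lia).
Qed.

Lemma dn_axes i j x1 y1 x2 y2 x3 y3 : j mod p = 0 ->
  s (i+1,j) = (x1,y1) -> s (i+1,j+1) = (x2,y2) -> s (i,j+1) = (x3,y3) ->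
  (x2=x1/\y2=y1+1/\x3=x1-1/\y3=y1+1) \/ (x2=x1/\y2=y1-1/\x3=x1+1/\y3=y1-1).
Proof.
  intros Hj E1 E2 E3.
  destruct (orient_dn_image p s s_or i j x1 y1 x2 y2 x3 y3) as [a [b [Hb T]]]; auto.
  destruct (s (i+1,j+1+1)) as [u2 v2] eqn:F2; destruct (s (i,j+1+1)) as [u3 v3] eqn:F3.
  destruct (orient_sq_image p s s_or i (j+1) x3 y3 x2 y2 u2 v2 u3 v3) as [a' [b' [Hb' Q]]]; auto.
  { destruct Hp; subst; mod_lia. }
  clear E1 E2 E3 F2 F3 s_or.
  unfold ccw_tri, ccw_sq in *.
  destruct Hp; subst; clear Hp; mod_facts;
  (destruct T as [T|[T|[T|[T|[T|T]]]]]; [ | | right; lia | left; lia | | ];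
   exfalso; split_hyps; subst; lia).
Qed.

Lemma sq_axes_near_triangles i j x0 y0 x1 y1 x2 y2 x3 y3 :
  j mod p <> 0 -> ((j+1) mod p = 0 \/ (j-1) mod p = 0) ->
  s (i,j) = (x0,y0) -> s (i+1,j) = (x1,y1) -> s (i+1,j+1) = (x2,y2) -> s (i,j+1) = (x3,y3) ->
  (x1=x0+1/\y1=y0/\x2=x0+1/\y2=y0+1/\x3=x0/\y3=y0+1) \/
  (x1=x0-1/\y1=y0/\x2=x0-1/\y2=y0-1/\x3=x0/\y3=y0-1).
Proof.
  intros Hj Hadj E0 E1 E2 E3.
  destruct (orient_sq_image p s s_or i j x0 y0 x1 y1 x2 y2 x3 y3) as [a [b [Hb Q]]]; auto.
  assert (Hhor : y2 = y3 \/ y0 = y1).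
  { destruct Hadj as [Ha|Ha].
    - left. destruct (s (i, j+1+1)) as [u v] eqn:F.
      destruct (up_axes i (j+1) x3 y3 x2 y2 u v) as [A|A]; auto; lia.
    - right. destruct (s (i+1, j-1)) as [u v] eqn:F.
      assert (F1 : s (i+1,j-1+1) = (x1,y1)) by (replace (j-1+1) with j by lia; auto).
      assert (F0 : s (i,j-1+1) = (x0,y0)) by (replace (j-1+1) with j by lia; auto).
      destruct (dn_axes i (j-1) u v x1 y1 x0 y0) as [A|A]; auto; lia. }
  clear E0 E1 E2 E3 s_or Hadj Hp Hj Hb.
  unfold ccw_sq in *.
  destruct Q as [Q|[Q|[Q|Q]]]; [left; lia | | right; lia | ]; exfalso; split_hyps; subst; lia.
Qed.

Lemma sq_axes i j x0 y0 x1 y1 x2 y2 x3 y3 : j mod p <> 0 ->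
  s (i,j) = (x0,y0) -> s (i+1,j) = (x1,y1) -> s (i+1,j+1) = (x2,y2) -> s (i,j+1) = (x3,y3) ->
  (x1=x0+1/\y1=y0/\x2=x0+1/\y2=y0+1/\x3=x0/\y3=y0+1) \/
  (x1=x0-1/\y1=y0/\x2=x0-1/\y2=y0-1/\x3=x0/\y3=y0-1).
Proof.
  intros Hj E0 E1 E2 E3.
  assert (Hc : ((j+1) mod p = 0 \/ (j-1) mod p = 0) \/
               ((j-1) mod p <> 0 /\ (j-1-1) mod p = 0)) by (destruct Hp; subst; mod_lia).
  destruct Hc as [Hc|[Hc1 Hc2]]. { eapply sq_axes_near_triangles; eauto. }
  destruct (orient_sq_image p s s_or i j x0 y0 x1 y1 x2 y2 x3 y3) as [a [b [Hb Q]]]; auto.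
  destruct (s (i, j-1)) as [u0 v0] eqn:F0. destruct (s (i+1, j-1)) as [u1 v1] eqn:F1.
  assert (F2 : s (i+1,j-1+1) = (x1,y1)) by (replace (j-1+1) with j by lia; auto).
  assert (F3 : s (i,j-1+1) = (x0,y0)) by (replace (j-1+1) with j by lia; auto).
  assert (Hhor : y0 = y1).
  { destruct (sq_axes_near_triangles i (j-1) u0 v0 u1 v1 x1 y1 x0 y0) as [A|A]; auto; lia. }
  clear E0 E1 E2 E3 F0 F1 F2 F3 s_or Hp Hj Hb Hc1 Hc2.
  unfold ccw_sq in *.
  destruct Q as [Q|[Q|[Q|Q]]]; [left; lia | | right; lia | ]; exfalso; split_hyps; subst; lia.
Qed.

Definition frame (i j d : Z) : Prop :=
  forall x y, s (i,j) = (x,y) -> s (i+1,j) = (x+d,y) /\ s (i,j+1) = (x,y+d).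

Lemma frame_exists i j : exists d, (d = 1 \/ d = -1) /\ frame i j d.
Proof.
  destruct (s (i,j)) as [x0 y0] eqn:E0; destruct (s (i+1,j)) as [x1 y1] eqn:E1;
  destruct (s (i+1,j+1)) as [x2 y2] eqn:E2; destruct (s (i,j+1)) as [x3 y3] eqn:E3.
  assert (HH : (x1=x0+1/\y1=y0/\x3=x0/\y3=y0+1) \/ (x1=x0-1/\y1=y0/\x3=x0/\y3=y0-1)).
  { destruct (Z.eq_dec (j mod p) 0) as [Hj|Hj].
    - destruct (up_axes i j x0 y0 x1 y1 x3 y3) as [A|A]; auto; lia.
    - destruct (sq_axes i j x0 y0 x1 y1 x2 y2 x3 y3) as [A|A]; auto; lia. }
  destruct HH as [[? [? [? ?]]]|[? [? [? ?]]]]; subst;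
  [exists 1 | exists (-1)]; split; auto; intros x y Exy; rewrite E0 in Exy;
  injection Exy; intros; subst; rewrite E1, E3; split; f_equal; lia.
Qed.

Lemma frame_right i j d d' : (d = 1 \/ d = -1) -> (d' = 1 \/ d' = -1) ->
  frame i j d -> frame (i+1) j d' -> d = d'.
Proof.
  intros Hd Hd' L1 L2.
  destruct (s (i,j)) as [x y] eqn:E0.
  destruct (L1 x y E0) as [E1 E3].
  destruct (L2 _ _ E1) as [_ E2].
  destruct (Z.eq_dec (j mod p) 0) as [Hj|Hj].
  - destruct (dn_axes i j (x+d) y (x+d) (y+d') x (y+d)) as [A|A]; auto; lia.
  - destruct (sq_axes i j x y (x+d) y (x+d) (y+d') x (y+d)) as [A|A]; auto; lia.
Qed.

Lemma frame_up i j d d' : (d = 1 \/ d = -1) -> (d' = 1 \/ d' = -1) ->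
  frame i j d -> frame i (j+1) d' -> d = d'.
Proof.
  intros Hd Hd' L1 L2.
  destruct (s (i,j)) as [x y] eqn:E0.
  destruct (L1 x y E0) as [E1 E3].
  destruct (L2 _ _ E3) as [E2 _].
  destruct (Z.eq_dec (j mod p) 0) as [Hj|Hj].
  - destruct (dn_axes i j (x+d) y (x+d') (y+d) x (y+d)) as [A|A]; auto; lia.
  - destruct (sq_axes i j x y (x+d) y (x+d') (y+d) x (y+d)) as [A|A]; auto; lia.
Qed.

Lemma frame_global : exists d, (d = 1 \/ d = -1) /\ forall i j, frame i j d.
Proof.
  destruct (frame_exists 0 0) as [d [Hd L0]].
  exists d; split; auto.
  assert (Hrow : forall j, frame 0 j d -> forall i, frame i j d).
  { intros j Lj. apply Z_bi_ind; auto.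
    - intros i Li. destruct (frame_exists (i+1) j) as [d' [Hd' L']].
      replace d with d'; auto. symmetry; eapply frame_right; eauto.
    - intros i Li. destruct (frame_exists i j) as [d' [Hd' L']].
      replace d with d'; auto. eapply frame_right; eauto. }
  intros i j. apply Hrow. revert j. apply Z_bi_ind; auto.
  - intros j Lj. destruct (frame_exists 0 (j+1)) as [d' [Hd' L']].
    replace d with d'; auto. symmetry; eapply frame_up; eauto.
  - intros j Lj. destruct (frame_exists 0 j) as [d' [Hd' L']].
    replace d with d'; auto. eapply frame_up; eauto.
Qed.

Lemma orient_aut_lattice_map :
  exists d x0 y0, (d = 1 \/ d = -1) /\ forall i j, s (i,j) = (x0 + d*i, y0 + d*j).
Proof.
  destruct frame_global as [d [Hd L]].
  destruct (s (0,0)) as [x0 y0] eqn:E0.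
  exists d, x0, y0; split; auto.
  assert (Hrow0 : forall i, s (i,0) = (x0 + d*i, y0 + d*0)).
  { apply Z_bi_ind.
    - rewrite E0; f_equal; lia.
    - intros i Hi. destruct (L i 0 _ _ Hi) as [A _]. rewrite A. destruct Hd; subst; f_equal; lia.
    - intros i Hi. destruct (s (i,0)) as [u v] eqn:Ei. destruct (L i 0 _ _ Ei) as [A _].
      rewrite Hi in A. injection A; intros. destruct Hd; subst; f_equal; lia. }
  intros i. apply Z_bi_ind.
  - rewrite Hrow0; auto.
  - intros j Hj. destruct (L i j _ _ Hj) as [_ A]. rewrite A. destruct Hd; subst; f_equal; lia.
  - intros j Hj. destruct (s (i,j)) as [u v] eqn:Ei. destruct (L i j _ _ Ei) as [_ A].
    rewrite Hj in A. injection A; intros. destruct Hd; subst; f_equal; lia.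
Qed.

End OrientedAutomorphism.

(** * The deck group consists of translations *)

(* A half-turn of K fixes a vertex, the midpoint of an edge, or the centre of
   a square, according to the parities of its centre coordinates. *)
Lemma half_turn_fixes_cell p (g : V -> V) x0 y0 :
  (forall i j, g (i,j) = (x0 - i, y0 - j)) ->
  (exists v, g v = v) \/
  (exists u v, edgeK p u v /\ ((g u = u /\ g v = v) \/ (g u = v /\ g v = u))) \/
  (exists f, faceK p f /\ set_image g f f).
Proof.
  intros Hg.
  pose proof (Z.div_mod x0 2 ltac:(lia)) as D1. pose proof (Z.mod_pos_bound x0 2 ltac:(lia)) as B1.
  pose proof (Z.div_mod y0 2 ltac:(lia)) as D2. pose proof (Z.mod_pos_bound y0 2 ltac:(lia)) as B2.
  set (q1 := x0 / 2) in *. set (q2 := y0 / 2) in *.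
  set (r1 := x0 mod 2) in *. set (r2 := y0 mod 2) in *.
  clearbody q1 q2 r1 r2.
  assert (Hr : (r1 = 0 \/ r1 = 1) /\ (r2 = 0 \/ r2 = 1)) by lia.
  destruct Hr as [[H1|H1] [H2|H2]].
  - left. exists (q1,q2). rewrite Hg. f_equal; lia.
  - right; left. exists (q1,q2), (q1,q2+1). split.
    + apply fwd_edgeK. simpl. lia.
    + right. rewrite !Hg. split; f_equal; lia.
  - right; left. exists (q1,q2), (q1+1,q2). split.
    + apply fwd_edgeK. simpl. lia.
    + right. rewrite !Hg. split; f_equal; lia.
  - destruct (Z.eq_dec (q2 mod p) 0) as [Hq|Hq].
    + right; left. exists (q1+1,q2), (q1,q2+1). split.
      * apply fwd_edgeK. simpl. lia.
      * right. rewrite !Hg. split; f_equal; lia.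
    + right; right. exists (sq q1 q2). split. { exists q1, q2; right; auto. }
      assert (Hin : forall x, In x (sq q1 q2) -> In (g x) (sq q1 q2)).
      { unfold sq; simpl; intros x [<-|[<-|[<-|[<-|[]]]]]; rewrite Hg;
        [right;right;left|right;right;right;left|left|right;left]; f_equal; lia. }
      assert (Hgg : forall x, g (g x) = x) by (intros [i j]; rewrite !Hg; f_equal; lia).
      intros z; split.
      * intros Hz. exists (g z). split; auto.
      * intros [x [Hx <-]]. auto.
Qed.

Definition translations (G : (V -> V) -> Prop) : Prop :=
  forall g, G g -> exists a b, forall x, g x = (fst x + a, snd x + b).

Lemma torus_quotient_translations p G :
  (p = 3 \/ p = 4) -> torus_quotient p G -> translations G.
Proof.
  intros Hp [_ [_ [HF [HO _]]]] g Hg.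
  destruct (orient_aut_lattice_map p g Hp (HO g Hg))
    as [d [x0 [y0 [[->| ->] Hf]]]].
  - exists x0, y0. intros [i j]. rewrite Hf. cbn [fst snd]. f_equal; lia.
  - exfalso.
    assert (Hid : forall x, g x = x).
    { apply (HF g Hg), (half_turn_fixes_cell p g x0 y0).
      intros i j. rewrite Hf. f_equal; lia. }
    pose proof (Hid (0,0)) as A. pose proof (Hid (1,0)) as B.
    rewrite Hf in A, B. injection A; injection B; intros; lia.
Qed.

(** * Automorphisms of the quotient *)

Definition symK (e : bool) (c1 c2 : Z) (x : V) : V :=
  if e then (c1 + fst x, c2 + snd x) else (c1 - fst x, c2 - snd x).

(* The half-turn sends strip [j] to strip [c2 - 1 - j]. *)
Definition symK_ok (p : Z) (e : bool) (c2 : Z) : Prop :=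
  if e then c2 mod p = 0 else (c2 - 1) mod p = 0.

Section LatticeSymmetries.

Variable p : Z.
Hypothesis Hp : p = 3 \/ p = 4.

Lemma symK_fwd_edge e c1 c2 u v : symK_ok p e c2 -> fwd_edge p u v ->
  edgeK p (symK e c1 c2 u) (symK e c1 c2 v).
Proof.
  intros Ho H. destruct u as [i j], v as [k l].
  destruct e; simpl in *.
  - apply fwd_edgeK. simpl. destruct Hp; subst; mod_lia.
  - apply edgeK_sym, fwd_edgeK. simpl. destruct Hp; subst; mod_lia.
Qed.

Lemma symK_edge e c1 c2 u v : symK_ok p e c2 -> edgeK p u v ->
  edgeK p (symK e c1 c2 u) (symK e c1 c2 v).
Proof.
  intros Ho H. destruct (edgeK_fwd p u v H) as [F|F];
    [|apply edgeK_sym]; apply symK_fwd_edge; auto.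
Qed.

Ltac in_list := simpl; repeat first [left; f_equal; lia | right].

Ltac preimage_in_list :=
  let y := fresh "y" in let Hy := fresh "Hy" in
  intros y Hy; simpl in Hy; repeat destruct Hy as [<-|Hy]; try contradiction;
  match goal with |- exists x, In x ?f /\ _ =>
    let rec pick l := match l with
      | ?a :: ?l' => first [exists a; split; [in_list | simpl; f_equal; lia] | pick l'] end in
    pick f end.

Lemma symK_face e c1 c2 f : symK_ok p e c2 -> faceK p f ->
  exists g, faceK p g /\ (forall x, In x f -> In (symK e c1 c2 x) g) /\
    (forall y, In y g -> exists x, In x f /\ symK e c1 c2 x = y).
Proof.
  intros Ho [i [j [[Hj [->| ->]] | [Hj ->]]]]; destruct e; simpl in Ho;
  [ exists (up (c1+i) (c2+j)) | exists (dn (c1-i-1) (c2-j-1)) | exists (dn (c1+i) (c2+j))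
  | exists (up (c1-i-1) (c2-j-1)) | exists (sq (c1+i) (c2+j)) | exists (sq (c1-i-1) (c2-j-1)) ].
  all: split; [ do 2 eexists;
                first [ left; split; [ | first [left; reflexivity | right; reflexivity]]
                      | right; split; [ | reflexivity]];
                destruct Hp; subst; mod_lia | ].
  all: unfold up, dn, sq; split;
    [ intros x Hx; simpl in Hx; repeat destruct Hx as [<-|Hx]; try contradiction; in_list
    | preimage_in_list ].
Qed.

Lemma symK_inv e c1 c2 : symK_ok p e c2 -> exists c1' c2', symK_ok p e c2' /\
  forall x, symK e c1' c2' (symK e c1 c2 x) = x /\ symK e c1 c2 (symK e c1' c2' x) = x.
Proof.
  intros Ho. destruct e.
  - exists (-c1), (-c2). split. { simpl in *. destruct Hp; subst; mod_lia. }
    intros [i j]; simpl; split; f_equal; lia.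
  - exists c1, c2. split; auto. intros [i j]; simpl; split; f_equal; lia.
Qed.

End LatticeSymmetries.

Section DeckGroup.

Variables (p : Z) (G : (V -> V) -> Prop).
Hypotheses (Hp : p = 3 \/ p = 4) (G_group : is_group G) (G_tr : translations G).

Lemma sameorb_refl u : sameorb G u u.
Proof. destruct G_group as [H1 _]. exists (fun x => x); auto. Qed.

Lemma sameorb_sym u v : sameorb G u v -> sameorb G v u.
Proof.
  destruct G_group as [_ [_ H3]]. intros [g [Hg <-]].
  destruct (H3 g Hg) as [h [Hh Hi]]. exists h; split; auto. apply Hi.
Qed.

Lemma sameorb_trans u v w : sameorb G u v -> sameorb G v w -> sameorb G u w.
Proof.
  destruct G_group as [_ [H2 _]]. intros [g [Hg <-]] [h [Hh <-]].
  exists (fun x => h (g x)); split; auto.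
Qed.

(* A half-turn conjugates a translation to its inverse, which lies in [G]. *)
Lemma sameorb_symK e c1 c2 u v :
  sameorb G u v -> sameorb G (symK e c1 c2 u) (symK e c1 c2 v).
Proof.
  intros [g [Hg <-]]. destruct (G_tr g Hg) as [a [b Hgf]].
  destruct e.
  - exists g; split; auto. rewrite !Hgf. destruct u; simpl; f_equal; lia.
  - destruct G_group as [_ [_ H3]]. destruct (H3 g Hg) as [h [Hh Hi]].
    destruct (G_tr h Hh) as [a' [b' Hhf]].
    pose proof (proj1 (Hi (0,0))) as Z0. rewrite Hgf, Hhf in Z0. simpl in Z0. injection Z0; intros.
    exists h; split; auto. rewrite Hhf, Hgf. destruct u; simpl; f_equal; lia.
Qed.

Lemma symK_isAutX e c1 c2 : symK_ok p e c2 -> isAutX p G (symK e c1 c2).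
Proof.
  intros Ho.
  destruct (symK_inv p Hp e c1 c2 Ho) as [c1' [c2' [Ho' Hi]]].
  set (s := symK e c1 c2) in *. set (s' := symK e c1' c2') in *.
  split; [|split; [|split; [|split; [|split; [|split]]]]].
  - intros u v H. apply sameorb_symK; auto.
  - intros u v H. apply (sameorb_symK e c1' c2') in H. fold s' in H.
    rewrite !(proj1 (Hi _)) in H. exact H.
  - intros w. exists (s' w). rewrite (proj2 (Hi w)). apply sameorb_refl.
  - intros u v H. exists (s u), (s v).
    split; [apply symK_edge; auto | split; apply sameorb_refl].
  - intros u' v' H. exists (s' u'), (s' v'). split; [apply symK_edge; auto |].
    rewrite !(proj2 (Hi _)). split; apply sameorb_refl.
  - intros f Hf. destruct (symK_face p Hp e c1 c2 f Ho Hf) as [g [Hg [H1 H2]]].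
    exists g; split; auto. split.
    + intros x Hx. exists (s x); split; auto. apply sameorb_refl.
    + intros y Hy. destruct (H2 y Hy) as [x [Hx <-]]. exists x; split; auto. apply sameorb_refl.
  - intros g Hg. destruct (symK_face p Hp e c1' c2' g Ho' Hg) as [f [Hf [H1 H2]]].
    exists f; split; auto. split.
    + intros x Hx. destruct (H2 x Hx) as [y [Hy <-]]. exists y; split; auto.
      fold s'. rewrite (proj2 (Hi y)). apply sameorb_refl.
    + intros y Hy. exists (s' y); split; auto. rewrite (proj2 (Hi y)). apply sameorb_refl.
Qed.

Lemma autX_orb_cover v : autX_orb p G (0,0) v \/ autX_orb p G (0,2) v.
Proof.
  destruct v as [i j].
  assert (Hc : j mod p = 0 \/ (j-1) mod p = 0 \/ (j-2) mod p = 0 \/ (j+2-1) mod p = 0)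
    by (destruct Hp; subst; mod_lia).
  destruct Hc as [Hc|[Hc|[Hc|Hc]]]; [left|left|right|right];
  [ exists (symK true i j) | exists (symK false i j)
  | exists (symK true i (j-2)) | exists (symK false i (j+2)) ];
  (split; [apply symK_isAutX; auto |]);
  match goal with |- sameorb G ?a _ => replace a with (i,j) by (simpl; f_equal; lia) end;
  apply sameorb_refl.
Qed.

(** * The two vertex types are not equivalent *)

Definition nbrs00 : list V := [(1,0); (-1,0); (0,1); (0,-1); (-1,1)].
Definition nbrs02 : list V := [(1,2); (-1,2); (0,3); (0,1)].

Lemma V_eq_dec (u v : V) : {u = v} + {u <> v}.
Proof. decide equality; apply Z.eq_dec. Defined.

Lemma edgeK_nbrs00 n : In n nbrs00 -> edgeK p (0,0) n.
Proof.
  assert (H0 : 0 mod p = 0) by (destruct Hp as [-> | ->]; reflexivity).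
  intros Hn; simpl in Hn; repeat destruct Hn as [<-|Hn]; try contradiction;
  first [apply fwd_edgeK; simpl; lia | apply edgeK_sym, fwd_edgeK; simpl; lia].
Qed.

Lemma edgeK_nbrs02 w : edgeK p (0,2) w -> In w nbrs02.
Proof.
  intros Hw. apply edgeK_fwd in Hw. destruct w as [k l]. simpl in *.
  assert (k = 1 /\ l = 2 \/ k = -1 /\ l = 2 \/ k = 0 /\ l = 3 \/ k = 0 /\ l = 1)
    as [[-> ->]|[[-> ->]|[[-> ->]|[-> ->]]]] by (destruct Hp as [-> | ->]; mod_lia);
  tauto.
Qed.

Hypothesis G_aut : forall g, G g -> isAutK p g.

Lemma sameorb_nbrs02 u v : edgeK p u v -> sameorb G u (0,2) ->
  exists m, In m nbrs02 /\ sameorb G v m.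
Proof.
  intros Huv [h [Hh Hhu]].
  destruct (G_aut h Hh) as [_ [h_edge _]].
  exists (h v). split.
  - apply edgeK_nbrs02. rewrite <- Hhu. exact (proj1 (h_edge u v) Huv).
  - exists h; auto.
Qed.

Lemma sameorb_common_nbr_eq u x y :
  (forall u v u' v', edgeK p u v -> edgeK p u' v' ->
     sameorb G u u' -> sameorb G v v' -> exists h, G h /\ h u = u' /\ h v = v') ->
  edgeK p u x -> edgeK p u y -> sameorb G x y -> x = y.
Proof.
  intros Hsimple Hx Hy Hxy.
  destruct (Hsimple _ _ _ _ Hx Hy (sameorb_refl u) Hxy) as [h [Hh [Hu Hv]]].
  destruct (G_tr h Hh) as [a [b Hf]]. rewrite Hf in Hu, Hv. destruct u as [i j].
  simpl in Hu. injection Hu; intros. subst. destruct x; simpl; f_equal; lia.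
Qed.

(* An automorphism of X sends the five neighbour classes of [(0,0)] injectively
   into the four neighbour classes of [(0,2)]. *)
Lemma not_autX_orb_00_02 : polyhedral_quotient p G -> ~ autX_orb p G (0,0) (0,2).
Proof.
  intros [_ [_ Hsimple]] [t [[_ [t_refl [_ [t_edge _]]]] Ht]].
  assert (Hlen : (length nbrs00 <= length nbrs02)%nat).
  { apply (rel_pigeonhole V_eq_dec (fun n m => sameorb G (t n) m)).
    - repeat constructor; simpl; intuition congruence.
    - intros n Hn. destruct (t_edge _ _ (edgeK_nbrs00 n Hn)) as [u' [v' [Huv [Hu Hv]]]].
      destruct (sameorb_nbrs02 u' v' Huv) as [m [Hm Hvm]].
      + apply (sameorb_trans _ (t (0,0))); auto. apply sameorb_sym; auto.
      + exists m; split; auto. apply (sameorb_trans _ v'); auto.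
    - intros n n' m Hn Hn' Hm Hm'.
      apply (sameorb_common_nbr_eq (0,0)); auto using edgeK_nbrs00.
      apply t_refl. apply (sameorb_trans _ m); auto. apply sameorb_sym; auto. }
  simpl in Hlen. lia.
Qed.

End DeckGroup.

Theorem theorem1 (p : Z) (G : (V -> V) -> Prop) :
  (p = 3 \/ p = 4) ->
  torus_quotient p G ->
  polyhedral_quotient p G ->
  exists a b : V,
    ~ autX_orb p G a b /\
    (forall v : V, autX_orb p G a v \/ autX_orb p G b v).
Proof.
  intros Hp TQ PQ.
  pose proof (torus_quotient_translations p G Hp TQ) as G_tr.
  destruct TQ as [G_group [G_aut _]].
  exists (0,0), (0,2). split.
  - exact (not_autX_orb_00_02 p G Hp G_group G_tr G_aut PQ).
  - exact (autX_orb_cover p G Hp G_group G_tr).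
Qed.
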